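(* Let $\mathbf{L}$ be the least monotonic predicate modal logic (respectively the least monotonic topped, the least monotonic cufi, the least monotonic topped cufi predicate modal logic). Then for every formula $\varphi$: $\varphi\in\mathbf{L}$ if and only if $Z\models\varphi$ for every monotonic (respectively monotonic topped, monotonic cufi, monotonic topped cufi) neighborhood frame $Z$. In particular, the least normal predicate modal logic $\mathbf{QK}$ is sound and complete with respect to the class of monotonic, topped, cufi neighborhood frames with constant domains.
   Context: Language: countable set $\mathsf{V}$ of variables, $\top,\bot$, $\land,\neg$, $\forall$, countably many $n$-ary predicate symbols for each $n\in\mathbb{N}$, and $\Box$. A predicate modal logic is a set $\mathbf{L}$ of formulas containing all theorems of classical predicate logic, closed under substitution, modus ponens, generalization, and the rule $\varphi\equiv\psi\in\mathbf{L}\Rightarrow\Box\varphi\equiv\Box\psi\in\mathbf{L}$. It is monotonic if it contains $\Box(p\land q)\supset\Box p\land\Box q$, topped if it contains $\Box\top$, cufi if it contains $\Box p\land\Box q\supset\Box(p\land q)$ ($p,q$ 0-ary predicate symbols); normal means monotonic, topped and cufi. A neighborhood frame is $\langle C,\mathcal{V}\rangle$ with $C\ne\emptyset$, $\mathcal{V}:C\to\mathcal{P}(\mathcal{P}(C))$; it is monotonic if each $\mathcal{V}(c)$ is upward closed under $\subseteq$, topped if $C\in\mathcal{V}(c)$ for all $c$, cufi if each $\mathcal{V}(c)$ is closed under non-empty finite intersections. A neighborhood model on $\langle C,\mathcal{V}\rangle$ adds a single non-empty domain $\mathcal{D}$ and an interpretation $\mathcal{I}(c,P)\subseteq\mathcal{D}^n$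 for $n$-ary $P$; truth sets under assignments $\mathcal{A}:\mathsf{V}\to\mathcal{D}$ are defined classically with $\|\forall x\varphi\|_{\mathcal{A}}=\bigcap$ over $x$-variants of $\mathcal{A}$ and $c\in\|\Box\varphi\|_{\mathcal{A}}$ iff $\|\varphi\|_{\mathcal{A}}\in\mathcal{V}(c)$. $\mathcal{M}\models\varphi$ means $\|\varphi\|_{\mathcal{A}}=C$ for all $\mathcal{A}$; $Z\models\varphi$ means $\mathcal{M}\models\varphi$ for every model $\mathcal{M}$ on $Z$ (every domain and interpretation). *)

From Stdlib Require Import List Arith.
Import ListNotations.

(* An atomic formula [FAtom k args] is the
   application of the predicate symbol P^n_k (the k-th predicate symbol of
   arity n) to the variables [args], where n = length args.  So there are
   countably many n-ary predicate symbols for every n. *)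
Inductive form : Type :=
| FTop : form
| FBot : form
| FAtom (k : nat) (args : list nat) : form
| FAnd (p q : form) : form
| FNeg (p : form) : form
| FAll (x : nat) (p : form) : form
| FBox (p : form) : form.

Definition Imp (p q : form) : form := FNeg (FAnd p (FNeg q)).
Definition Equiv (p q : form) : form := FAnd (Imp p q) (Imp q p).

Definition upd {T : Type} (f : nat -> T) (x : nat) (t : T) : nat -> T :=
  fun v => if Nat.eqb v x then t else f v.

Fixpoint free (v : nat) (p : form) : Prop :=
  match p with
  | FTop | FBot => False
  | FAtom _ args => In v args
  | FAnd p q => free v p \/ free v q
  | FNeg p => free v p
  | FAll x p => v <> x /\ free v p
  | FBox p => free v p
  end.

(** Simultaneous substitution of variables for free variables (naive: it is
    only meaningful together with the side condition [vsafe]). *)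
Fixpoint vsubst (s : nat -> nat) (p : form) : form :=
  match p with
  | FTop => FTop
  | FBot => FBot
  | FAtom k args => FAtom k (map s args)
  | FAnd p q => FAnd (vsubst s p) (vsubst s q)
  | FNeg p => FNeg (vsubst s p)
  | FAll x p => FAll x (vsubst (upd s x x) p)
  | FBox p => FBox (vsubst s p)
  end.

(* No variable introduced by [s] gets captured by a quantifier of p. *)
Fixpoint vsafe (s : nat -> nat) (p : form) : Prop :=
  match p with
  | FTop | FBot | FAtom _ _ => True
  | FAnd p q => vsafe s p /\ vsafe s q
  | FNeg p => vsafe s p
  | FAll x q => vsafe (upd s x x) q /\ (forall v, v <> x -> free v q -> s v <> x)
  | FBox p => vsafe s p
  end.

Fixpoint inst (xs ys : list nat) (v : nat) : nat :=
  match xs, ys with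
  | x :: xs', y :: ys' => if Nat.eqb v x then y else inst xs' ys' v
  | _, _ => v
  end.

(** A (simultaneous) formula substitution [S] assigns to every predicate symbol
    P^n_k a pair (xs, C) : a list xs of n distinct variables and a formula C;
    it replaces every atom P^n_k(y_1..y_n) by C[y_1/x_1,...,y_n/x_n]. *)
Definition fsubst := nat -> nat -> (list nat * form).

Definition wf_fsubst (S : fsubst) : Prop :=
  forall n k, length (fst (S n k)) = n /\ NoDup (fst (S n k)).

Fixpoint psubst (S : fsubst) (p : form) : form :=
  match p with
  | FTop => FTop
  | FBot => FBot
  | FAtom k args =>
      vsubst (inst (fst (S (length args) k)) args) (snd (S (length args) k))
  | FAnd p q => FAnd (psubst S p) (psubst S q)
  | FNeg p => FNeg (psubst S p)
  | FAll x p => FAll x (psubst S p)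
  | FBox p => FBox (psubst S p)
  end.

(* Admissibility (no variable capture): [B] is the set of variables bound
   above the current position. *)
Fixpoint psafe (B : nat -> Prop) (S : fsubst) (p : form) : Prop :=
  match p with
  | FTop | FBot => True
  | FAtom k args =>
      vsafe (inst (fst (S (length args) k)) args) (snd (S (length args) k)) /\
      (forall v, free v (snd (S (length args) k)) ->
                 ~ In v (fst (S (length args) k)) -> ~ B v)
  | FAnd p q => psafe B S p /\ psafe B S q
  | FNeg p => psafe B S p
  | FAll x q => psafe (fun v => v = x \/ B v) S q
  | FBox p => psafe B S p
  end.

Fixpoint beval (val : form -> bool) (p : form) : bool :=
  match p with
  | FTop => true
  | FBot => false
  | FAnd p q => beval val p && beval val q
  | FNeg p => negb (beval val p)
  | _ => val p
  end.

Definition tautology (p : form) : Prop := forall val, beval val p = true.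

Inductive CPL : form -> Prop :=
| cpl_taut p : tautology p -> CPL p
| cpl_inst x y p :
    vsafe (upd (fun v => v) x y) p ->
    CPL (Imp (FAll x p) (vsubst (upd (fun v => v) x y) p))
| cpl_gen_ax x p q :
    ~ free x p -> CPL (Imp (FAll x (Imp p q)) (Imp p (FAll x q)))
| cpl_mp p q : CPL p -> CPL (Imp p q) -> CPL q
| cpl_gen x p : CPL p -> CPL (FAll x p).

Definition is_PML (L : form -> Prop) : Prop :=
  (forall p, CPL p -> L p) /\
  (forall (S : fsubst) p, wf_fsubst S -> psafe (fun _ => False) S p ->
       L p -> L (psubst S p)) /\
  (forall p q, L p -> L (Imp p q) -> L q) /\
  (forall x p, L p -> L (FAll x p)) /\
  (forall p q, L (Equiv p q) -> L (Equiv (FBox p) (FBox q))).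

Definition p0 : form := FAtom 0 [].
Definition q0 : form := FAtom 1 [].

Definition ax_mono : form := Imp (FBox (FAnd p0 q0)) (FAnd (FBox p0) (FBox q0)).
Definition ax_top : form := FBox FTop.
Definition ax_cufi : form := Imp (FAnd (FBox p0) (FBox q0)) (FBox (FAnd p0 q0)).

Definition LeastLogic (Ax : form -> Prop) (p : form) : Prop :=
  forall L, is_PML L -> (forall a, Ax a -> L a) -> L p.

Definition ax_set (t c : bool) (a : form) : Prop :=
  a = ax_mono \/ (t = true /\ a = ax_top) \/ (c = true /\ a = ax_cufi).

(* QK: least normal (= monotonic, topped, cufi) predicate modal logic *)
Definition QK (p : form) : Prop :=
  LeastLogic (fun a => a = ax_mono \/ a = ax_top \/ a = ax_cufi) p.

Section Semantics.
Context {C D : Type}.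

Fixpoint sat (V : C -> (C -> Prop) -> Prop) (I : C -> nat -> nat -> list D -> Prop)
  (A : nat -> D) (p : form) (c : C) : Prop :=
  match p with
  | FTop => True
  | FBot => False
  | FAtom k args => I c (length args) k (map A args)
  | FAnd p q => sat V I A p c /\ sat V I A q c
  | FNeg p => ~ sat V I A p c
  | FAll x p => forall d : D, sat V I (upd A x d) p c
  | FBox p => V c (fun c' => sat V I A p c')
  end.
End Semantics.

Definition monotonicN {C : Type} (V : C -> (C -> Prop) -> Prop) : Prop :=
  forall c (X Y : C -> Prop), V c X -> (forall w, X w -> Y w) -> V c Y.

Definition toppedN {C : Type} (V : C -> (C -> Prop) -> Prop) : Prop :=
  forall c, V c (fun _ => True).

Definition cufiN {C : Type} (V : C -> (C -> Prop) -> Prop) : Prop :=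
  forall c (l : list (C -> Prop)), l <> [] -> (forall X, In X l -> V c X) ->
    V c (fun w => forall X, In X l -> X w).

Definition fvalid {C : Type} (V : C -> (C -> Prop) -> Prop) (p : form) : Prop :=
  forall (D : Type), inhabited D ->
  forall (I : C -> nat -> nat -> list D -> Prop) (A : nat -> D) (c : C),
    sat V I A p c.

(* For a frame class, the set [Valid t c] of formulas valid on all
   monotonic (topped if t, cufi if c) frames is itself a predicate modal logic
   containing the axioms, hence contains the least one.  The only non-trivial
   closure property is substitution of formulas for predicate symbols, which
   semantically amounts to reinterpreting the predicate symbols
   ([sat_psubst]); variable substitution is handled by [sat_vsubst].

   Let L be a predicate modal logic and M a bound on the
   variables of a formula.  A Lindenbaum-Henkin construction extends every
   L-consistent formula to a maximal consistent set whose existential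
   witnesses are all variables d + M ([lindenbaum]).  The canonical frame has
   these sets as worlds and lets X be a neighborhood of G iff some box
   formula of G has its truth set inside X; the domain is nat, d standing for
   the variable d + M.  When L contains the monotonicity axiom, the truth
   lemma ([truth]) holds for formulas whose bound variables are below M; the
   frame is monotonic by construction, and topped resp. cufi when L contains
   the corresponding axiom.  A non-theorem has a consistent negated universal
   closure, which is then falsified in the canonical model. *)

From Stdlib Require Import List Arith Lia Classical FunctionalExtensionality
  PropExtensionality IndefiniteDescription Cantor.
Import ListNotations.

Definition decide (P : Prop) : {P} + {~ P}.
Proof.
  destruct (constructive_indefinite_description
              (fun b : bool => if b then P else ~ P)) as [[|] H].
  - destruct (classic P); [exists true|exists false]; auto.
  - left; auto.
  - right; auto.
Defined.

Lemma upd_eq {T} (f : nat -> T) x t : upd f x t x = t.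
Proof. unfold upd. now rewrite Nat.eqb_refl. Qed.

Lemma upd_neq {T} (f : nat -> T) x t v : v <> x -> upd f x t v = f v.
Proof. unfold upd. intros H. destruct (Nat.eqb_spec v x); congruence. Qed.

Lemma le_list_max x l : In x l -> x <= list_max l.
Proof.
  intros H. pose proof (proj1 (list_max_le l _) (le_n _)) as Hle.
  rewrite Forall_forall in Hle. auto.
Qed.

(** * Syntactic facts about variables and substitution *)

Fixpoint bnd (z : nat) (p : form) : Prop :=
  match p with
  | FTop | FBot | FAtom _ _ => False
  | FAnd p q => bnd z p \/ bnd z q
  | FNeg p => bnd z p
  | FAll x p => z = x \/ bnd z p
  | FBox p => bnd z p
  end.

Fixpoint vars (p : form) : list nat :=
  match p with
  | FTop | FBot => []
  | FAtom _ args => args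
  | FAnd p q => vars p ++ vars q
  | FNeg p => vars p
  | FAll x p => x :: vars p
  | FBox p => vars p
  end.

(* [free_under v z p]: v occurs free in p inside the scope of a quantifier
   over z; exactly the occurrences that a substitution of z for v captures. *)
Fixpoint free_under (v z : nat) (p : form) : Prop :=
  match p with
  | FTop | FBot | FAtom _ _ => False
  | FAnd p q => free_under v z p \/ free_under v z q
  | FNeg p => free_under v z p
  | FAll x q => v <> x /\ ((z = x /\ free v q) \/ free_under v z q)
  | FBox p => free_under v z p
  end.

Lemma free_vars v p : free v p -> In v (vars p).
Proof. induction p; simpl; intuition (auto using in_or_app). Qed.

Lemma bnd_vars v p : bnd v p -> In v (vars p).
Proof. induction p; simpl; intuition (auto using in_or_app). Qed.

Lemma free_under_neq p : forall v z, free_under v z p -> v <> z.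
Proof. induction p; simpl; intros; intuition eauto; subst; auto. Qed.

Lemma free_under_free p : forall v z, free_under v z p -> free v p.
Proof. induction p; simpl; intros; intuition eauto. Qed.

Lemma vsubst_ext p : forall s s', (forall v, free v p -> s v = s' v) ->
  vsubst s p = vsubst s' p.
Proof.
  induction p; intros s s' H; simpl in *; f_equal; auto.
  - apply map_ext_in. auto.
  - apply IHp. intros v Hv. unfold upd. destruct (Nat.eqb_spec v x); auto.
Qed.

Lemma vsubst_id p s : (forall v, free v p -> s v = v) -> vsubst s p = p.
Proof.
  intros H. transitivity (vsubst (fun v => v) p); [now apply vsubst_ext|].
  clear. induction p; simpl; f_equal; auto.
  - apply map_id.
  - rewrite <- IHp at 2. apply vsubst_ext. intros v _. unfold upd.
    destruct (Nat.eqb_spec v x); auto.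
Qed.

Lemma vsubst_comp p : forall s1 s2, vsafe s1 p ->
  vsubst s2 (vsubst s1 p) = vsubst (fun v => s2 (s1 v)) p.
Proof.
  induction p; intros s1 s2 H; simpl in *; f_equal; try tauto.
  - apply map_map.
  - apply IHp1; tauto.
  - apply IHp2; tauto.
  - auto.
  - destruct H as [H1 H2]. rewrite IHp by auto. apply vsubst_ext.
    intros v Hv. unfold upd. destruct (Nat.eqb_spec v x).
    + now rewrite Nat.eqb_refl.
    + destruct (Nat.eqb_spec (s1 v) x); auto. exfalso; eapply H2; eauto.
  - auto.
Qed.

Lemma free_vsubst p : forall s v, free v (vsubst s p) ->
  exists u, free u p /\ s u = v.
Proof.
  induction p; intros s v H; simpl in *; try tauto; auto.
  - apply in_map_iff in H. firstorder.
  - destruct H as [H|H]; [destruct (IHp1 _ _ H)|destruct (IHp2 _ _ H)]; firstorder.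
  - destruct H as [Hn H]. destruct (IHp _ _ H) as [u [Hu Hs]].
    destruct (Nat.eqb_spec u x).
    + subst. rewrite upd_eq in Hn. congruence.
    + rewrite upd_neq in Hs by auto. exists u; auto.
Qed.

Lemma bnd_vsubst p : forall s z, bnd z (vsubst s p) <-> bnd z p.
Proof.
  induction p; intros s z; simpl in *; try tauto.
  - rewrite IHp1, IHp2; tauto.
  - rewrite IHp; tauto.
  - rewrite IHp; tauto.
  - rewrite IHp; tauto.
Qed.

Lemma free_under_vsubst p : forall s v z, free_under v z (vsubst s p) ->
  exists u, free_under u z p /\ s u = v.
Proof.
  induction p; intros s v z H; simpl in *; try tauto; auto.
  - destruct H as [H|H]; [destruct (IHp1 _ _ _ H)|destruct (IHp2 _ _ _ H)];
      firstorder.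
  - destruct H as [Hn H].
    assert (Hu : exists u, ((z = x /\ free u p) \/ free_under u z p) /\
                           upd s x x u = v).
    { destruct H as [[Hz H]|H].
      - destruct (free_vsubst _ _ _ H) as [u [Hu Hs]]. eauto.
      - destruct (IHp _ _ _ H) as [u [Hu Hs]]. eauto. }
    destruct Hu as [u [Hu Hs]]. destruct (Nat.eqb_spec u x).
    + subst. rewrite upd_eq in Hn. congruence.
    + rewrite upd_neq in Hs by auto. exists u; auto.
Qed.

Lemma vsafe_bnd p : forall s, (forall v, free v p -> bnd (s v) p -> s v = v) ->
  vsafe s p.
Proof.
  induction p; intros s H; simpl in *; try exact I.
  - split; [apply IHp1|apply IHp2]; intros v Hv Hb; apply H; auto.
  - apply IHp; auto.
  - split.
    + apply IHp. intros v Hv Hb. unfold upd in *.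
      destruct (Nat.eqb_spec v x); auto.
    + intros v Hv Hf Heq. assert (s v = v) by (apply H; auto). congruence.
  - apply IHp; auto.
Qed.

Lemma vsafe_free_under p : forall s,
  (forall v z, free_under v z p -> s v <> z) -> vsafe s p.
Proof.
  induction p; intros s H; simpl in *; try exact I.
  - split; [apply IHp1|apply IHp2]; intros v z Hv; apply H; auto.
  - apply IHp; auto.
  - split.
    + apply IHp. intros v z Hv. unfold upd. destruct (Nat.eqb_spec v x).
      * subst. apply (free_under_neq _ _ _ Hv).
      * apply H. auto.
    + intros v Hv Hf. apply H. auto.
  - apply IHp; auto.
Qed.

Definition ren (x y : nat) : nat -> nat := upd (fun v => v) x y.

Lemma ren_safe p x y : ~ In y (vars p) -> vsafe (ren x y) p.
Proof.
  intros Hy. apply vsafe_bnd. intros v Hv Hb. unfold ren, upd in *.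
  destruct (Nat.eqb_spec v x); auto. exfalso. apply Hy, bnd_vars; auto.
Qed.

Lemma ren_back_safe p x y : ~ In y (vars p) ->
  vsafe (ren y x) (vsubst (ren x y) p).
Proof.
  intros Hy. apply vsafe_free_under. intros v z H.
  destruct (free_under_vsubst _ _ _ _ H) as [u [Hu Hs]].
  pose proof (free_under_neq _ _ _ H) as Hvz.
  unfold ren, upd in *. destruct (Nat.eqb_spec v y); auto.
  subst v. destruct (Nat.eqb_spec u x).
  - subst. apply (free_under_neq _ _ _ Hu).
  - subst. exfalso. apply Hy. apply free_vars. eapply free_under_free; eauto.
Qed.

Lemma ren_back p x y : ~ In y (vars p) ->
  vsubst (ren y x) (vsubst (ren x y) p) = p.
Proof.
  intros Hy. rewrite vsubst_comp by (apply ren_safe; auto).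
  apply vsubst_id. intros v Hv. unfold ren, upd.
  destruct (Nat.eqb_spec v x).
  - now rewrite Nat.eqb_refl.
  - destruct (Nat.eqb_spec v y); auto. subst. exfalso. apply Hy, free_vars; auto.
Qed.

Lemma ren_not_free p x y : x <> y -> ~ free x (vsubst (ren x y) p).
Proof.
  intros Hxy H. destruct (free_vsubst _ _ _ H) as [u [Hu Hs]].
  unfold ren, upd in Hs. destruct (Nat.eqb_spec u x); congruence.
Qed.

(** * Semantics *)

Section Semantics.
Context {W D : Type} (V : W -> (W -> Prop) -> Prop).

(* Truth sets that agree pointwise are equal, so a neighborhood function
   cannot distinguish them. *)
Lemma V_ext w (X Y : W -> Prop) : (forall u, X u <-> Y u) -> V w X <-> V w Y.
Proof.
  intros H. replace Y with X; [tauto|].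
  apply functional_extensionality; intro u. apply propositional_extensionality, H.
Qed.

Lemma sat_imp I A a b w :
  sat V I A (Imp a b) w <-> (sat V I A a w -> sat (D := D) V I A b w).
Proof. unfold Imp; simpl. split; [intros H Ha; apply NNPP|]; tauto. Qed.

Lemma sat_equiv I A a b w :
  sat V I A (Equiv a b) w <-> (sat V I A a w <-> sat (D := D) V I A b w).
Proof.
  unfold Equiv.
  change (sat V I A (FAnd (Imp a b) (Imp b a)) w)
    with (sat V I A (Imp a b) w /\ sat V I A (Imp b a) w).
  rewrite !sat_imp. tauto.
Qed.

Lemma sat_ext p : forall (I : W -> nat -> nat -> list D -> Prop) A A',
  (forall v, free v p -> A v = A' v) -> forall w, sat V I A p w <-> sat V I A' p w.
Proof.
  induction p; intros I A A' H w; simpl in *; try tauto.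
  - rewrite (map_ext_in A A' args); [tauto|auto].
  - rewrite (IHp1 I A A'), (IHp2 I A A'); auto; tauto.
  - rewrite (IHp I A A'); auto; tauto.
  - split; intros Hs d; eapply (IHp I); try apply Hs; intros v Hv; unfold upd;
      destruct (Nat.eqb_spec v x); auto; symmetry; auto.
  - apply V_ext. intro u. apply IHp. auto.
Qed.

Lemma sat_vsubst p : forall s (I : W -> nat -> nat -> list D -> Prop) A, vsafe s p ->
  forall w, sat V I A (vsubst s p) w <-> sat V I (fun v => A (s v)) p w.
Proof.
  induction p; intros s I A Hs w; simpl in *; try tauto.
  - rewrite length_map, map_map. tauto.
  - rewrite IHp1, IHp2 by tauto. tauto.
  - rewrite IHp by tauto. tauto.
  - destruct Hs as [Hs1 Hs2].
    assert (E : forall d u, sat V I (fun v => upd A x d (upd s x x v)) p u <->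
                            sat V I (upd (fun v => A (s v)) x d) p u).
    { intros d. apply sat_ext. intros v Hv. unfold upd.
      destruct (Nat.eqb_spec v x). { subst. now rewrite Nat.eqb_refl. }
      destruct (Nat.eqb_spec (s v) x); auto. exfalso; eapply Hs2; eauto. }
    split; intros H d; [apply E, IHp, H; auto | apply IHp, E, H; auto].
  - apply V_ext. intro u. apply IHp. auto.
Qed.

Fixpoint assign (xs : list nat) (ds : list D) (A : nat -> D) : nat -> D :=
  match xs, ds with
  | x :: xs', d :: ds' => upd (assign xs' ds' A) x d
  | _, _ => A
  end.

Lemma assign_inst xs : forall args (A A0 : nat -> D) v, length xs = length args ->
  (In v xs -> A (inst xs args v) = assign xs (map A args) A0 v) /\
  (~ In v xs -> inst xs args v = v /\ assign xs (map A args) A0 v = A0 v).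
Proof.
  induction xs as [|x xs IH]; intros args A A0 v Hl; simpl.
  - tauto.
  - destruct args as [|a args]; simpl in Hl; [discriminate|]. simpl.
    unfold upd. destruct (Nat.eqb_spec v x).
    + split; auto. intros H; exfalso; auto.
    + destruct (IH args A A0 v) as [H1 H2]; [lia|]. split.
      * intros [H|H]; [congruence|auto].
      * intros H. apply H2. tauto.
Qed.

Definition subst_interp (S : fsubst) (I : W -> nat -> nat -> list D -> Prop)
  (A0 : nat -> D) : W -> nat -> nat -> list D -> Prop :=
  fun w n k ds => sat V I (assign (fst (S n k)) ds A0) (snd (S n k)) w.

(* Substitution lemma for formula substitutions: B collects the variables
   bound above the current position, on which A may differ from A0. *)
Lemma sat_psubst S (HS : wf_fsubst S) p : forall (B : nat -> Prop) I A A0,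
  psafe B S p -> (forall v, ~ B v -> A v = A0 v) ->
  forall w, sat V I A (psubst S p) w <-> sat V (subst_interp S I A0) A p w.
Proof.
  induction p; intros B I A A0 Hp HA w; simpl in *; try tauto.
  - destruct Hp as [Hs Hf]. rewrite sat_vsubst by auto. unfold subst_interp.
    apply sat_ext. intros v Hv.
    destruct (HS (length args) k) as [Hl _].
    destruct (assign_inst _ args A A0 v Hl) as [H1 H2].
    destruct (classic (In v (fst (S (length args) k)))) as [Hi|Hi]; auto.
    destruct (H2 Hi) as [-> ->]. apply HA. eapply Hf; eauto.
  - rewrite (IHp1 B I A A0), (IHp2 B I A A0) by tauto. tauto.
  - rewrite (IHp B I A A0) by tauto. tauto.
  - split; intros H d; [rewrite <- IHp|rewrite IHp]; eauto;
      intros v Hv; unfold upd; destruct (Nat.eqb_spec v x); try tauto; apply HA; tauto.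
  - apply V_ext. intro u. apply (IHp B); auto.
Qed.

(* Evaluating a formula at a world gives a boolean valuation that agrees with
   [beval] on all formulas, so tautologies are true everywhere. *)
Definition world_val (I : W -> nat -> nat -> list D -> Prop) A w : form -> bool :=
  fun q => if decide (sat V I A q w) then true else false.

Lemma beval_world_val I A w p : beval (world_val I A w) p = true <-> sat V I A p w.
Proof.
  induction p; try (simpl; unfold world_val; destruct decide as [h|h];
     simpl in h; split; intros; (discriminate || tauto)).
  - simpl; split; auto.
  - simpl; split; [discriminate|tauto].
  - simpl. rewrite Bool.andb_true_iff. tauto.
  - simpl. rewrite Bool.negb_true_iff, <- Bool.not_true_iff_false. tauto.
  - simpl; unfold world_val; destruct decide as [h|h]; split; intros; auto.
    all: try discriminate. all: exfalso; apply h; simpl; auto.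
Qed.

End Semantics.

Lemma CPL_valid {W : Type} (V : W -> (W -> Prop) -> Prop) p : CPL p -> fvalid V p.
Proof.
  induction 1; intros Dt HD I A w.
  - apply (beval_world_val V I A w). apply H.
  - rewrite sat_imp. simpl. intros H1. rewrite sat_vsubst by auto.
    eapply sat_ext; [|apply (H1 (A y))]. intros v Hv. unfold upd.
    destruct (Nat.eqb_spec v x); auto.
  - rewrite !sat_imp. intros H1 Hp d. apply (proj1 (sat_imp _ _ _ _ _ _) (H1 d)).
    eapply sat_ext; [|apply Hp]. intros v Hv. unfold upd.
    destruct (Nat.eqb_spec v x); subst; tauto.
  - pose proof (IHCPL2 Dt HD I A w) as H2. rewrite sat_imp in H2. auto.
  - simpl. intros d. apply IHCPL; auto.
Qed.


(** * Soundness *)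

Definition Valid (t c : bool) (p : form) : Prop :=
  forall (W : Type), inhabited W ->
  forall V : W -> (W -> Prop) -> Prop,
    monotonicN V -> (t = true -> toppedN V) -> (c = true -> cufiN V) -> fvalid V p.

Lemma Valid_PML t c : is_PML (Valid t c).
Proof.
  split; [|split; [|split; [|split]]].
  - intros p Hp W HW V _ _ _. apply CPL_valid; auto.
  - intros S a HS Hps Hp W HW V Hm Ht Hc Dt HD I A w.
    rewrite (sat_psubst V S HS a (fun _ => False) I A A) by auto.
    apply Hp; auto.
  - intros a b Hp Hq W HW V Hm Ht Hc Dt HD I A w.
    pose proof (Hq W HW V Hm Ht Hc Dt HD I A w) as H2.
    rewrite sat_imp in H2. apply H2, Hp; auto.
  - intros x a Hp W HW V Hm Ht Hc Dt HD I A w d. apply Hp; auto.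
  - intros a b Hp W HW V Hm Ht Hc Dt HD I A w. rewrite sat_equiv. simpl.
    apply V_ext. intro u. rewrite <- sat_equiv. apply Hp; auto.
Qed.

Lemma Valid_ax t c a : ax_set t c a -> Valid t c a.
Proof.
  intros [->|[[-> ->]|[-> ->]]]; intros W HW V Hm Ht Hc Dt HD I A w.
  - unfold ax_mono. rewrite sat_imp. simpl. intros H; split; eapply Hm; eauto; simpl; tauto.
  - apply Ht; auto.
  - unfold ax_cufi. rewrite sat_imp. simpl. intros [H1 H2].
    eapply Hm; [apply (Hc eq_refl w [fun u => I u 0 0 []; fun u => I u 0 1 []])|].
    + discriminate.
    + simpl. intros X [<-|[<-|[]]]; auto.
    + simpl. intros u Hu. split; apply Hu; auto.
Qed.

Theorem soundness t c p : LeastLogic (ax_set t c) p -> Valid t c p.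
Proof. intros H. apply H; [apply Valid_PML | apply Valid_ax]. Qed.

(** * Derivations in a predicate modal logic *)

Ltac prove_taut :=
  let val := fresh "val" in
  intro val; unfold Equiv, Imp; cbn [beval];
  repeat match goal with
         | |- context [beval val ?x] => destruct (beval val x)
         | |- context [val ?x] => destruct (val x)
         end; reflexivity.

Section Derivations.
Variable L : form -> Prop.
Hypothesis HL : is_PML L.

Lemma L_cpl p : CPL p -> L p.
Proof. apply HL. Qed.

Lemma L_mp p q : L p -> L (Imp p q) -> L q.
Proof. apply HL. Qed.

Lemma L_gen x p : L p -> L (FAll x p).
Proof. apply HL. Qed.

Lemma L_taut p : tautology p -> L p.
Proof. intros; apply L_cpl, cpl_taut; auto. Qed.

Lemma L_taut1 a b : tautology (Imp a b) -> L a -> L b.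
Proof. intros T Ha. eapply L_mp; [apply Ha|apply L_taut, T]. Qed.

Lemma L_taut2 a b c : tautology (Imp a (Imp b c)) -> L a -> L b -> L c.
Proof. intros T Ha Hb. eapply L_mp; [apply Hb|]. eapply L_mp; [apply Ha|apply L_taut, T]. Qed.

Definition subst_pq (a b : form) : fsubst := fun n k =>
  match n with
  | 0 => match k with 0 => ([], a) | 1 => ([], b) | _ => ([], FTop) end
  | _ => (seq 0 n, FTop)
  end.

Lemma subst_pq_wf a b : wf_fsubst (subst_pq a b).
Proof.
  intros n k. destruct n; simpl.
  - destruct k as [|[|k]]; simpl; split; auto; constructor.
  - split; [apply (length_seq (S n) 0)|apply (seq_NoDup (S n) 0)].
Qed.

Lemma vsubst_inst_nil p : vsubst (inst [] []) p = p.
Proof. apply vsubst_id. reflexivity. Qed.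

Lemma L_subst_pq a b ax : L ax -> In ax [ax_mono; ax_cufi] ->
  L (psubst (subst_pq a b) ax).
Proof.
  intros Hax Hs. apply HL; auto. apply subst_pq_wf.
  assert (Hsafe : forall p, vsafe (inst [] []) p) by (intros; apply vsafe_bnd; auto).
  destruct Hs as [ <- | [ <- | [] ] ]; simpl; repeat split; auto.
Qed.

Lemma L_mono_inst a b : L ax_mono -> L (Imp (FBox (FAnd a b)) (FAnd (FBox a) (FBox b))).
Proof.
  intros H. pose proof (L_subst_pq a b _ H (or_introl eq_refl)) as H2.
  simpl in H2. now rewrite !vsubst_inst_nil in H2.
Qed.

Lemma L_cufi_inst a b : L ax_cufi -> L (Imp (FAnd (FBox a) (FBox b)) (FBox (FAnd a b))).
Proof.
  intros H. pose proof (L_subst_pq a b _ H (or_intror (or_introl eq_refl))) as H2.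
  simpl in H2. now rewrite !vsubst_inst_nil in H2.
Qed.

Lemma L_box_mono a b : L ax_mono -> L (Imp a b) -> L (Imp (FBox a) (FBox b)).
Proof.
  intros Hm Hab.
  assert (E : L (Equiv a (FAnd a b))) by (eapply L_taut1; [|apply Hab]; prove_taut).
  apply HL in E.
  eapply L_taut2; [|apply E|apply (L_mono_inst a b Hm)]. prove_taut.
Qed.

Lemma L_witness G x y psi :
  ~ In y (vars G) -> ~ In y (vars psi) -> x <> y ->
  L (Imp G (vsubst (ren x y) psi)) -> L (Imp G (FAll x psi)).
Proof.
  intros HG Hp Hxy H.
  set (chi := vsubst (ren x y) psi) in *.
  assert (H1 : L (Imp G (FAll y chi))).
  { eapply L_mp; [apply L_gen, H|]. apply L_cpl, cpl_gen_ax.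
    intros Hf. apply HG, free_vars, Hf. }
  assert (H2 : L (Imp (FAll y chi) psi)).
  { pose proof (cpl_inst y x chi (ren_back_safe psi x y Hp)) as C.
    unfold chi in C at 2. fold (ren y x) in C. rewrite ren_back in C by auto.
    apply L_cpl, C. }
  assert (H3 : L (Imp (FAll y chi) (FAll x psi))).
  { eapply L_mp; [apply L_gen, H2|]. apply L_cpl, cpl_gen_ax.
    simpl. intros [_ Hf]. eapply ren_not_free; [apply Hxy|apply Hf]. }
  eapply L_taut2; [|apply H1|apply H3]. prove_taut.
Qed.

End Derivations.

(** * An enumeration of formulas *)

Fixpoint code_list (l : list nat) : nat :=
  match l with [] => 0 | a :: l => S (to_nat (a, code_list l)) end.

Fixpoint code (p : form) : nat :=
  match p with
  | FTop => to_nat (0, 0)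
  | FBot => to_nat (1, 0)
  | FAtom k args => to_nat (2, to_nat (k, code_list args))
  | FAnd p q => to_nat (3, to_nat (code p, code q))
  | FNeg p => to_nat (4, code p)
  | FAll x p => to_nat (5, to_nat (x, code p))
  | FBox p => to_nat (6, code p)
  end.

Lemma code_list_inj l : forall l', code_list l = code_list l' -> l = l'.
Proof.
  induction l as [|a l IH]; intros [|b l'] H; cbn [code_list] in *;
    try discriminate; auto.
  apply eq_add_S, to_nat_inj in H. injection H as -> H. f_equal; auto.
Qed.

Lemma code_inj p : forall q, code p = code q -> p = q.
Proof.
  induction p; intros q H; destruct q; cbn [code] in H;
    apply to_nat_inj, pair_equal_spec in H; destruct H as [H0 H];
    try discriminate; try reflexivity;
    try (apply to_nat_inj, pair_equal_spec in H; destruct H as [H1 H2]);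
    subst; f_equal; auto.
  apply code_list_inj; auto.
Qed.

Definition decode (n : nat) : form :=
  match decide (exists p, code p = n) with
  | left h => proj1_sig (constructive_indefinite_description _ h)
  | right _ => FTop
  end.

Lemma decode_code p : decode (code p) = p.
Proof.
  unfold decode. destruct decide as [h|h].
  - destruct constructive_indefinite_description as [q Hq]. apply code_inj; auto.
  - exfalso; apply h; eauto.
Qed.

(** * The Lindenbaum–Henkin construction *)

Section Lindenbaum.
Variable L : form -> Prop.
Hypothesis HL : is_PML L.
(* Witnesses are taken among the variables d + M. *)
Variable M : nat.

Definition Con (p : form) : Prop := ~ L (FNeg p).

Definition fresh_wit (G : form) : nat := S (list_max (vars G)) + M.

Lemma fresh_wit_fresh G : ~ In (fresh_wit G) (vars G).
Proof. intros H. apply le_list_max in H. unfold fresh_wit in H. lia. Qed.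

Definition step (G th : form) : form :=
  if decide (Con (FAnd G th)) then
    match th with
    | FNeg (FAll x psi) =>
        FAnd (FAnd G th) (FNeg (vsubst (ren x (fresh_wit (FAnd G th))) psi))
    | _ => FAnd G th
    end
  else G.

Lemma step_imp G th : L (Imp (step G th) G).
Proof.
  unfold step. destruct decide.
  - destruct th as [| | | | th | |]; try destruct th; apply L_taut; auto; prove_taut.
  - apply L_taut; auto; prove_taut.
Qed.

Lemma step_in G th : Con (FAnd G th) -> L (Imp (step G th) th).
Proof.
  intros Hc. unfold step. destruct decide; [|tauto].
  destruct th as [| | | | th | |]; try destruct th; apply L_taut; auto; prove_taut.
Qed.

Lemma step_con G th : Con G -> Con (step G th).
Proof.
  intros Hc. unfold step. destruct decide as [h|h]; auto.
  destruct th as [| | | | th | |]; auto. destruct th; auto.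
  set (G' := FAnd G (FNeg (FAll x th))) in *.
  assert (Hfresh : ~ In (fresh_wit G') (x :: vars th)).
  { intros Hi. apply (fresh_wit_fresh G'). unfold G'. simpl. apply in_or_app. auto. }
  intros H. apply h.
  assert (Hall : L (Imp G' (FAll x th))).
  { apply (L_witness L HL G' x (fresh_wit G') th); auto using fresh_wit_fresh.
    - intros Hi. apply Hfresh. now right.
    - intros E. apply Hfresh. now left. }
  unfold G' in *. refine (L_taut1 L HL _ _ _ Hall); prove_taut.
Qed.

Variable phi0 : form.

Fixpoint stage (n : nat) : form :=
  match n with 0 => phi0 | S n => step (stage n) (decode n) end.

Lemma stage_chain n m : n <= m -> L (Imp (stage m) (stage n)).
Proof.
  induction 1.
  - apply L_taut; auto; prove_taut.
  - change (stage (S m)) with (step (stage m) (decode m)).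
    refine (L_taut2 L HL _ _ _ _ (step_imp (stage m) (decode m)) IHle); prove_taut.
Qed.

Hypothesis Hcon : Con phi0.

Lemma stage_con n : Con (stage n).
Proof. induction n; simpl; auto. apply step_con; auto. Qed.

Definition Lind (p : form) : Prop := exists n, L (Imp (stage n) p).

Lemma Lind_common a b : Lind a -> Lind b ->
  exists n, L (Imp (stage n) a) /\ L (Imp (stage n) b).
Proof.
  intros [n Hn] [m Hm]. exists (max n m).
  pose proof (stage_chain n (max n m) ltac:(lia)) as Cn.
  pose proof (stage_chain m (max n m) ltac:(lia)) as Cm.
  split; [refine (L_taut2 L HL _ _ _ _ Cn Hn) | refine (L_taut2 L HL _ _ _ _ Cm Hm)];
    prove_taut.
Qed.

Lemma Lind_con p : Lind p -> Lind (FNeg p) -> False.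
Proof.
  intros H1 H2. destruct (Lind_common _ _ H1 H2) as [n [A1 A2]].
  apply (stage_con n). refine (L_taut2 L HL _ _ _ _ A1 A2); prove_taut.
Qed.

Lemma Lind_max p : Lind p \/ Lind (FNeg p).
Proof.
  destruct (classic (Con (FAnd (stage (code p)) p))) as [h|h].
  - left. exists (S (code p)). simpl. rewrite decode_code. apply step_in; auto.
  - right. exists (code p). apply NNPP in h. refine (L_taut1 L HL _ _ _ h); prove_taut.
Qed.

Lemma Lind_thm p : L p -> Lind p.
Proof. intros H. exists 0. refine (L_taut1 L HL _ _ _ H); prove_taut. Qed.

Lemma Lind_mp a b : Lind a -> Lind (Imp a b) -> Lind b.
Proof.
  intros H1 H2. destruct (Lind_common _ _ H1 H2) as [n [A1 A2]].
  exists n. refine (L_taut2 L HL _ _ _ _ A1 A2); prove_taut.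
Qed.

Lemma Lind_henkin x psi : Lind (FNeg (FAll x psi)) ->
  exists d, Lind (FNeg (vsubst (ren x (d + M)) psi)).
Proof.
  intros Hg. set (th := FNeg (FAll x psi)) in *.
  assert (Hc : Con (FAnd (stage (code th)) th)).
  { intros H. apply (Lind_con th); auto.
    exists (code th). refine (L_taut1 L HL _ _ _ H); prove_taut. }
  exists (S (list_max (vars (FAnd (stage (code th)) th)))). exists (S (code th)).
  cbn [stage]. rewrite decode_code. unfold step. destruct decide; [|tauto].
  unfold th, fresh_wit. apply L_taut; auto. prove_taut.
Qed.

Lemma Lind_phi0 : Lind phi0.
Proof. exists 0. cbn [stage]. apply L_taut; auto. prove_taut. Qed.

End Lindenbaum.

(** * The canonical model *)

Section Canonical.
Variable L : form -> Prop.
Hypothesis HL : is_PML L.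
Variable M : nat.

Record MCS (G : form -> Prop) : Prop := {
  mcs_thm : forall a, L a -> G a;
  mcs_mp : forall a b, G a -> G (Imp a b) -> G b;
  mcs_max : forall a, G a \/ G (FNeg a);
  mcs_con : forall a, G a -> G (FNeg a) -> False;
  mcs_henkin : forall x psi, G (FNeg (FAll x psi)) ->
     exists d, G (FNeg (vsubst (ren x (d + M)) psi)) }.

Lemma lindenbaum phi : Con L phi -> exists G, MCS G /\ G phi.
Proof.
  intros Hc. exists (Lind L M phi). split; [constructor|].
  - apply Lind_thm; auto.
  - apply Lind_mp; auto.
  - apply Lind_max; auto.
  - apply Lind_con; auto.
  - apply Lind_henkin; auto.
  - apply Lind_phi0; auto.
Qed.

Section MCSFacts.
Variable G : form -> Prop.
Hypothesis HG : MCS G.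

Lemma mcs_imp a b : L (Imp a b) -> G a -> G b.
Proof. intros H Ha. eapply mcs_mp; eauto. apply mcs_thm; auto. Qed.

Lemma mcs_neg a : G (FNeg a) <-> ~ G a.
Proof.
  split; [intros H Ha; eapply mcs_con; eauto|].
  intros H. destruct (mcs_max _ HG a); tauto.
Qed.

Lemma mcs_and a b : G (FAnd a b) <-> G a /\ G b.
Proof.
  split.
  - intros H. split; eapply mcs_imp; eauto; apply L_taut; auto; prove_taut.
  - intros [Ha Hb]. apply (mcs_mp _ HG b); auto. apply (mcs_mp _ HG a); auto.
    apply mcs_thm; auto. apply L_taut; auto; prove_taut.
Qed.

Lemma mcs_top : G FTop.
Proof. apply mcs_thm; auto. apply L_taut; auto. prove_taut. Qed.

Lemma mcs_bot : ~ G FBot.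
Proof.
  intros H. apply (mcs_con _ HG FTop); [apply mcs_top|].
  eapply mcs_imp; eauto. apply L_taut; auto; prove_taut.
Qed.

Lemma mcs_all x psi : (forall d, ~ bnd (d + M) psi) ->
  G (FAll x psi) <-> forall d, G (vsubst (ren x (d + M)) psi).
Proof.
  intros Hb. split.
  - intros H d. eapply mcs_imp; eauto. apply L_cpl; auto. apply cpl_inst.
    apply vsafe_bnd. intros v Hv Hbv. unfold upd in *. destruct (Nat.eqb_spec v x); auto.
    exfalso; eapply Hb; eauto.
  - intros H. apply NNPP. intros Hn. apply mcs_neg in Hn.
    destruct (mcs_henkin _ HG _ _ Hn) as [d Hd]. apply mcs_neg in Hd; auto.
Qed.

End MCSFacts.

Lemma mcs_valid_imp chi psi : (forall G, MCS G -> G chi -> G psi) -> L (Imp chi psi).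
Proof.
  intros H. apply NNPP. intros Hn.
  destruct (lindenbaum (FAnd chi (FNeg psi)) Hn) as [G [HG HGc]].
  apply (mcs_and G HG) in HGc. destruct HGc as [H1 H2].
  apply (mcs_neg G HG) in H2. apply H2, H; auto.
Qed.

Definition World := {G | MCS G}.

Definition can_nbhd (w : World) (X : World -> Prop) : Prop :=
  exists chi, proj1_sig w (FBox chi) /\ forall u : World, proj1_sig u chi -> X u.

(* The individual d stands for the variable d + M. *)
Definition can_interp (w : World) (n k : nat) (ds : list nat) : Prop :=
  proj1_sig w (FAtom k (map (fun d => d + M) ds)).

Lemma truth p : L ax_mono -> (forall z, bnd z p -> z < M) ->
  forall (A : nat -> nat) (w : World),
    sat can_nbhd can_interp A p w <-> proj1_sig w (vsubst (fun v => A v + M) p).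
Proof.
  intros Hmono. induction p; intros Hb A [G HG]; simpl in *.
  - split; auto; intros _; apply mcs_top; auto.
  - split; [tauto|]. apply mcs_bot; auto.
  - unfold can_interp. simpl. rewrite map_map. tauto.
  - rewrite mcs_and by auto.
    rewrite (IHp1 (fun z h => Hb z (or_introl h)) A (exist _ G HG)),
            (IHp2 (fun z h => Hb z (or_intror h)) A (exist _ G HG)). simpl. tauto.
  - rewrite mcs_neg by auto. rewrite (IHp ltac:(auto) A (exist _ G HG)). simpl. tauto.
  - assert (Hb' : forall z, bnd z p -> z < M) by (intros z h; apply Hb; auto).
    assert (Hx : x < M) by (apply Hb; auto).
    rewrite mcs_all by (auto; intros d Hd; apply bnd_vsubst, Hb' in Hd; lia).
    assert (Hs : vsafe (upd (fun v => A v + M) x x) p).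
    { apply vsafe_bnd. intros v Hv Hbv. unfold upd in *.
      destruct (Nat.eqb_spec v x); auto. apply Hb' in Hbv. lia. }
    assert (E : forall d, vsubst (ren x (d + M)) (vsubst (upd (fun v => A v + M) x x) p)
                        = vsubst (fun v => upd A x d v + M) p).
    { intros d. rewrite vsubst_comp by auto. apply vsubst_ext. intros v Hv.
      unfold ren, upd. destruct (Nat.eqb_spec v x); [now rewrite Nat.eqb_refl|].
      destruct (Nat.eqb_spec (A v + M) x); auto. lia. }
    split; intros H d; specialize (H d); rewrite E in *;
      [apply (IHp Hb' (upd A x d) (exist _ G HG)) in H | apply (IHp Hb' (upd A x d) (exist _ G HG))];
      exact H.
  - unfold can_nbhd. simpl. split.
    + intros [chi [Hc Hx]]. eapply mcs_imp; [auto|apply L_box_mono; auto|apply Hc].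
      apply mcs_valid_imp. intros D HD HDc.
      apply (IHp Hb A (exist _ D HD)). apply (Hx (exist _ D HD)). auto.
    + intros H. exists (vsubst (fun v => A v + M) p). split; auto.
      intros D. apply (IHp Hb A D).
Qed.

Lemma can_nbhd_mono : monotonicN can_nbhd.
Proof. intros w X Y [chi [H1 H2]] HXY. exists chi. split; auto. Qed.

Lemma can_nbhd_top : L ax_top -> toppedN can_nbhd.
Proof.
  intros Ht [G HG]. exists FTop. split; auto. apply mcs_thm; auto.
Qed.

(* With the cufi axiom, the neighborhoods are closed under binary and hence
   non-empty finite intersections. *)
Lemma can_nbhd_meet w (X Y : World -> Prop) : L ax_cufi ->
  can_nbhd w X -> can_nbhd w Y -> can_nbhd w (fun u => X u /\ Y u).
Proof.
  intros Hc [chi1 [H1 K1]] [chi2 [H2 K2]]. destruct w as [G HG].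
  exists (FAnd chi1 chi2). split.
  - eapply mcs_imp; [auto|apply L_cufi_inst; auto|]. apply mcs_and; auto.
  - intros [D HD] HDc. simpl in HDc. apply mcs_and in HDc; auto.
    split; [apply K1 | apply K2]; tauto.
Qed.

Lemma can_nbhd_cufi : L ax_cufi -> cufiN can_nbhd.
Proof.
  intros Hc w l. induction l as [|X l IH]; intros Hl HX; [congruence|].
  destruct l as [|Y l].
  - eapply can_nbhd_mono; [apply HX; now left|]. intros u Hu Z [<-|[]]; auto.
  - eapply can_nbhd_mono.
    + apply can_nbhd_meet; [auto | apply HX; now left | apply IH; [discriminate|]].
      intros Z HZ. apply HX. now right.
    + intros u [Hu1 Hu2] Z [<-|HZ]; auto. apply Hu2, HZ.
Qed.

End Canonical.

(** * Completeness *)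

Lemma LeastLogic_PML Ax : is_PML (LeastLogic Ax).
Proof.
  split; [|split; [|split; [|split]]].
  - intros p Hp L HL _. apply HL, Hp.
  - intros S p HS Hs Hp L HL HA. apply HL; auto. apply Hp; auto.
  - intros p q Hp Hq L HL HA. eapply HL; [apply Hp|apply Hq]; auto.
  - intros x p Hp L HL HA. apply HL. apply Hp; auto.
  - intros p q Hp L HL HA. apply HL. apply Hp; auto.
Qed.

Lemma LeastLogic_ax (Ax : form -> Prop) a : Ax a -> LeastLogic Ax a.
Proof. intros H L HL HA. auto. Qed.

Definition closure (l : list nat) (p : form) : form := fold_right FAll p l.

Lemma closure_free l p v : free v (closure l p) -> free v p /\ ~ In v l.
Proof.
  induction l; simpl; intros H; [auto|].
  destruct H as [H1 H2]. apply IHl in H2. intuition.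
Qed.

Lemma closure_L L (HL : is_PML L) l p : L (closure l p) -> L p.
Proof.
  induction l as [|x l IH]; simpl; intros H; auto. apply IH.
  eapply L_mp; [auto|apply H|]. apply L_cpl; auto.
  assert (Hid : forall v, ren x x v = v)
    by (intros v; unfold ren, upd; destruct (Nat.eqb_spec v x); auto).
  pose proof (cpl_inst x x (closure l p)) as C.
  rewrite vsubst_id in C by auto. apply C, vsafe_bnd. auto.
Qed.

Lemma closure_sat {W D : Type} (V : W -> (W -> Prop) -> Prop) I w l p :
  (forall A : nat -> D, sat V I A p w) -> forall A, sat V I A (closure l p) w.
Proof. induction l; simpl; intros H A; auto. Qed.

Theorem completeness t c p : Valid t c p -> LeastLogic (ax_set t c) p.
Proof.
  intros Hv. apply NNPP. intros Hn.
  set (L := LeastLogic (ax_set t c)) in *.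
  assert (HL : is_PML L) by apply LeastLogic_PML.
  set (psi := closure (vars p) p).
  set (M := S (list_max (vars psi))).
  assert (Hc : Con L (FNeg psi)).
  { intros H. apply Hn, (closure_L L HL (vars p)). fold psi. refine (L_taut1 L HL _ _ _ H). prove_taut. }
  destruct (lindenbaum L HL M _ Hc) as [G [HG HGp]].
  pose (w := exist _ G HG : World L M).
  assert (Hs : sat (can_nbhd L M) (can_interp L M) (fun _ => 0) psi w).
  { apply closure_sat. intros A. apply (Hv (World L M) (inhabits w)).
    - apply can_nbhd_mono.
    - intros ->. apply can_nbhd_top; auto. apply LeastLogic_ax. right; left; auto.
    - intros ->. apply can_nbhd_cufi; auto. apply LeastLogic_ax. right; right; auto.
    - constructor. exact 0. }
  apply (truth L HL M psi) in Hs.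
  - simpl in Hs. rewrite vsubst_id in Hs.
    + eapply (mcs_con L M G HG); eauto.
    + intros v Hv'. exfalso. apply closure_free in Hv'.
      destruct Hv' as [H1 H2]. apply H2, free_vars, H1.
  - apply LeastLogic_ax. now left.
  - intros z Hz. apply bnd_vars, le_list_max in Hz. unfold M. lia.
Qed.

Lemma QK_least_logic p : QK p <-> LeastLogic (ax_set true true) p.
Proof.
  unfold QK, LeastLogic, ax_set.
  split; intros H L HL HA; apply H; auto; intros a Ha; apply HA; intuition.
Qed.

Theorem mainTheorem5 :
  (forall (t c : bool) (p : form),
      LeastLogic (ax_set t c) p <->
      (forall (W : Type), inhabited W ->
       forall V : W -> (W -> Prop) -> Prop,
         monotonicN V -> (t = true -> toppedN V) -> (c = true -> cufiN V) ->
         fvalid V p)) /\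
  (forall p : form,
      QK p <->
      (forall (W : Type), inhabited W ->
       forall V : W -> (W -> Prop) -> Prop,
         monotonicN V -> toppedN V -> cufiN V -> fvalid V p)).
Proof.
  assert (Adequacy : forall t c p, LeastLogic (ax_set t c) p <-> Valid t c p)
    by (split; [apply soundness | apply completeness]).
  split; [exact Adequacy|].
  intros p. rewrite QK_least_logic, Adequacy. unfold Valid.
  split; intros H W HW V Hm Ht Hc; apply H; auto.
Qed.
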